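(* Let $a,b\in\mathbb{R}$ with $b\neq0$, $T>0$, $h\in(0,1)$, and let $m_\Lambda[n]=\exp\!\big(\jmath\,\frac{a}{2b}(nTh)^2\big)$ for $n\in\mathbb{Z}$. Let $u=(u[n])_{n\in\mathbb{Z}}$ be the state sequence of the first-order $\Lambda\Sigma\Delta$ scheme $$u[n]=g[n]-q_{\Lambda}[n]+e^{-\jmath\frac{a(2n-1)(Th)^2}{2b}}u[n-1],\qquad q_{\Lambda}[n]=\operatorname{csgn}\!\Big(e^{-\jmath\frac{a(2n-1)(Th)^2}{2b}}u[n-1]+g[n]\Big),$$ driven by samples $g[n]=g(nTh)$ of a signal $g$ bandlimited to $[-\Omega,\Omega]$ in the LCT domain with $|g|\le1$, where the states satisfy $|\operatorname{Re}(u[n])|<1$ and $|\operatorname{Im}(u[n])|<1$ for all $n\in\mathbb{Z}$. Let $\varphi:\mathbb{R}\to\mathbb{C}$ be continuously differentiable with $\varphi'\in L^1(\mathbb{R})$ and $\sum_{n\in\mathbb{Z}}|\varphi(x-nh)|<\infty$ for every $x\in\mathbb{R}$. Define $\tilde u[n]=m_\Lambda[n]u[n]$, $v[n]=\delta[n]-\delta[n-1]$, and $$e(t)=h\,e^{-\jmath\frac{a t^2}{2b}}\sum_{n\in\mathbb{Z}}(\tilde u* v)[n]\,\varphi\!\Big(\frac{t}{T}-nh\Big),\qquad t\in\mathbb{R}.$$ Then for all $t\in\mathbb{R}$, $$|e(t)|\le h\sqrt{2}\,\|\varphi'\|_{L^1}.$$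
   Context: $\jmath$ is the imaginary unit; $*$ denotes discrete convolution, so $(\tilde u*v)[n]=\tilde u[n]-\tilde u[n-1]$; $\delta$ is the Kronecker delta. $\operatorname{csgn}(z)=\operatorname{sgn}(\operatorname{Re}z)+\jmath\operatorname{sgn}(\operatorname{Im}z)$ with $\operatorname{sgn}$ taking values $\pm1$. $e(t)$ is the approximation error $g(t)-\tilde g(t)$ of the reconstruction $\tilde g(t)=h\,e^{-\jmath\frac{at^2}{2b}}\sum_n m_\Lambda[n]q_\Lambda[n]\varphi(\frac tT-nh)$ with low-pass kernel $\varphi$ of bandwidth $\Omega$, and $T=\pi b/\Omega$. The Linear Canonical Transform has parameter matrix $\Lambda=\begin{bmatrix}a&b\\c&d\end{bmatrix}$, $ad-bc=1$. *)

From Stdlib Require Import Reals ZArith.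
From Coquelicot Require Import Coquelicot.
Open Scope R_scope.

Definition cis (theta : R) : C := (cos theta, sin theta).

Definition sgnpm (x : R) : R := if Rle_dec 0 x then 1 else -1.

Definition csgn (z : C) : C := (sgnpm (Re z), sgnpm (Im z)).

Definition zsummable (f : Z -> R) : Prop :=
  ex_series (fun n : nat => f (Z.of_nat n)) /\
  ex_series (fun n : nat => f (- Z.of_nat n - 1)%Z).

Definition zsumR (f : Z -> R) : R :=
  Series (fun n : nat => f (Z.of_nat n)) + Series (fun n : nat => f (- Z.of_nat n - 1)%Z).

Definition zsumC (f : Z -> C) : C :=
  (zsumR (fun n => Re (f n)), zsumR (fun n => Im (f n))).

Definition mLam (a b T h : R) (n : Z) : C := cis (a / (2 * b) * (IZR n * T * h) ^ 2).

(* discrete convolution with v = delta - delta[. - 1] *)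
Definition conv_v (x : Z -> C) (n : Z) : C := Cminus (x n) (x (n - 1)%Z).

(* Bandlimitedness to [-Om, Om] in the LCT domain with parameters (a,b,c,d), b <> 0:
   G(w) = K0 * e^{j d w^2/(2b)} * int g(t) e^{j(a t^2/(2b) - t w / b)} dt, and the
   prefactor is nonzero, so G(w) = 0 iff the integral (improper, exists) is 0. *)
Definition LCT_bandlimited (a b Om : R) (g : R -> C) : Prop :=
  forall w : R, Om < Rabs w ->
    is_RInt_gen (V := C_R_NormedModule)
      (fun t => Cmult (g t) (cis (a * t ^ 2 / (2 * b) - t * w / b)))
      (Rbar_locally m_infty) (Rbar_locally p_infty) (RtoC 0).

Definition err (a b T h : R) (u : Z -> C) (phi : R -> C) (t : R) : C :=
  Cmult (Cmult (RtoC h) (cis (- (a * t ^ 2) / (2 * b))))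
    (zsumC (fun n => Cmult (conv_v (fun k => Cmult (mLam a b T h k) (u k)) n)
                           (phi (t / T - IZR n * h)))).

(* Summation by parts moves the difference operator of [conv_v] onto the kernel samples: with
   x = t/T the error sum becomes sum_k ũ[k] (φ(x - kh) - φ(x - (k+1)h)).  The chirp has modulus
   one, so |ũ[k]| <= √2 by the stability of the states, and each kernel increment is bounded by
   the integral of |φ'| over [x - (k+1)h, x - kh]; these intervals are disjoint, so the total is
   at most √2 ‖φ'‖_{L¹}.  The boundary terms of the truncated sums vanish because the kernel
   samples are summable. *)

From Stdlib Require Import Reals ZArith Lra Lia.
From Coquelicot Require Import Coquelicot.
Open Scope R_scope.

Lemma Cmod_cis (theta : R) : Cmod (cis theta) = 1.
Proof.
  unfold Cmod, cis; simpl.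
  rewrite !Rmult_1_r, Rplus_comm, <- !Rsqr_def, sin2_cos2.
  apply sqrt_1.
Qed.

Lemma Cmod_le_sqrt2 (z : C) : Rabs (Re z) <= 1 -> Rabs (Im z) <= 1 -> Cmod z <= sqrt 2.
Proof.
  intros Hre Him.
  eapply Rle_trans; [apply Cmod_2Rmax |].
  rewrite <- (Rmult_1_r (sqrt 2)) at 2.
  apply Rmult_le_compat_l; [apply sqrt_pos | apply Rmax_lub; assumption].
Qed.

Lemma norm_C_R (z : C) : norm (K := R_AbsRing) (V := C_R_NormedModule) z = Cmod z.
Proof.
  destruct z as [p q].
  unfold norm; simpl; unfold prod_norm, Cmod; simpl; unfold norm; simpl; unfold abs; simpl.
  rewrite !Rmult_1_r, <- !Rsqr_def, <- !Rsqr_abs.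
  reflexivity.
Qed.

Lemma continuous_Cmod_comp (f : R -> C) (x : R) :
  continuous f x -> continuous (fun y => Cmod (f y)) x.
Proof.
  intro Hf.
  apply continuous_ext with (fun y => norm (K := R_AbsRing) (V := C_R_NormedModule) (f y)).
  - intro; apply norm_C_R.
  - exact (continuous_comp f _ x Hf (filterlim_norm (K := R_AbsRing) (V := C_R_NormedModule) (f x))).
Qed.

Lemma Cmod_sub_le_RInt_derive (phi dphi : R -> C) (z y : R) :
  (forall x, is_derive (K := R_AbsRing) (V := C_R_NormedModule) phi x (dphi x)) ->
  (forall x, continuous dphi x) -> z <= y ->
  Cmod (phi y - phi z) <= RInt (fun x => Cmod (dphi x)) z y.
Proof.
  intros Hd Hc Hzy.
  assert (Hint : ex_RInt (fun x => Cmod (dphi x)) z y).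
  { apply (ex_RInt_continuous (V := R_CompleteNormedModule)).
    intros; apply continuous_Cmod_comp, Hc. }
  rewrite <- norm_C_R.
  apply (norm_RInt_le dphi (fun x => Cmod (dphi x)) z y _ _ Hzy).
  - intros; rewrite norm_C_R; lra.
  - exact (is_RInt_derive (V := C_R_CompleteNormedModule) phi dphi z y
             (fun x _ => Hd x) (fun x _ => Hc x)).
  - exact (RInt_correct (V := R_CompleteNormedModule) _ _ _ Hint).
Qed.

Section ContinuousIntegrand.

Variable g : R -> R.
Hypothesis g_cont : forall x, continuous g x.

Lemma ex_RInt_everywhere (p q : R) : ex_RInt g p q.
Proof.
  apply (ex_RInt_continuous (V := R_CompleteNormedModule)).
  intros; apply g_cont.
Qed.

Lemma RInt_sub_RInt (c p q : R) : RInt g c q - RInt g c p = RInt g p q.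
Proof.
  rewrite <- (RInt_Chasles g c p q) by apply ex_RInt_everywhere.
  change plus with Rplus; ring.
Qed.

Lemma RInt_le_RInt_gen (p q : R) :
  (forall x, 0 <= g x) ->
  ex_RInt_gen g (Rbar_locally m_infty) (Rbar_locally p_infty) -> p <= q ->
  RInt g p q <= RInt_gen g (Rbar_locally m_infty) (Rbar_locally p_infty).
Proof.
  intros Hpos Hex Hpq.
  pose proof (RInt_gen_correct (V := R_CompleteNormedModule) g Hex) as Hlim.
  set (l := RInt_gen g (Rbar_locally m_infty) (Rbar_locally p_infty)) in *.
  (* Integrals over [lo, hi] containing [p, q] dominate [RInt g p q], yet approach [l]. *)
  apply Rnot_lt_le; intro Hlt.
  assert (Heps : 0 < RInt g p q - l) by lra.
  destruct (Hlim _ (locally_ball l (mkposreal _ Heps))) as [P Q [M HM] [M' HM'] HPQ].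
  set (lo := Rmin M p - 1). set (hi := Rmax M' q + 1).
  assert (Hlo : lo < M /\ lo <= p) by (unfold lo; pose proof (Rmin_l M p); pose proof (Rmin_r M p); lra).
  assert (Hhi : M' < hi /\ q <= hi) by (unfold hi; pose proof (Rmax_l M' q); pose proof (Rmax_r M' q); lra).
  destruct (HPQ lo hi (HM lo (proj1 Hlo)) (HM' hi (proj1 Hhi))) as [y [Hy Hball]].
  apply is_RInt_unique in Hy; simpl in Hy.
  pose proof (RInt_Chasles g lo p q (ex_RInt_everywhere _ _) (ex_RInt_everywhere _ _)) as C1.
  pose proof (RInt_Chasles g lo q hi (ex_RInt_everywhere _ _) (ex_RInt_everywhere _ _)) as C2.
  pose proof (RInt_ge_0 g lo p (proj2 Hlo) (ex_RInt_everywhere _ _) (fun x _ => Hpos x)) as P1.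
  pose proof (RInt_ge_0 g q hi (proj2 Hhi) (ex_RInt_everywhere _ _) (fun x _ => Hpos x)) as P2.
  change plus with Rplus in C1, C2.
  unfold ball in Hball; simpl in Hball.
  unfold AbsRing_ball, abs, minus, plus, opp in Hball; simpl in Hball.
  rewrite <- Hy in Hball. apply Rabs_def2 in Hball. lra.
Qed.

End ContinuousIntegrand.

Definition zpartial (f : Z -> C) (N : nat) : C :=
  sum_n (fun n => (f (Z.of_nat n) + f (- Z.of_nat n - 1)%Z)%C) N.

Lemma zpartial_0 (f : Z -> C) : zpartial f 0 = (f 0%Z + f (-1)%Z)%C.
Proof. unfold zpartial; rewrite sum_O; reflexivity. Qed.

Lemma zpartial_S (f : Z -> C) (N : nat) :
  zpartial f (S N) = (zpartial f N + f (Z.of_nat N + 1)%Z + f (- Z.of_nat N - 2)%Z)%C.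
Proof.
  unfold zpartial; rewrite sum_Sn.
  change plus with Cplus.
  rewrite Nat2Z.inj_succ, <- Z.add_1_r.
  replace (- (Z.of_nat N + 1) - 1)%Z with (- Z.of_nat N - 2)%Z by lia.
  apply Cplus_assoc.
Qed.

Lemma Re_sum_n (s : nat -> C) (N : nat) : Re (sum_n s N) = sum_n (fun n => Re (s n)) N.
Proof.
  induction N as [|N IH]; [rewrite !sum_O; reflexivity |].
  rewrite !sum_Sn, <- IH; reflexivity.
Qed.

Lemma Im_sum_n (s : nat -> C) (N : nat) : Im (sum_n s N) = sum_n (fun n => Im (s n)) N.
Proof.
  induction N as [|N IH]; [rewrite !sum_O; reflexivity |].
  rewrite !sum_Sn, <- IH; reflexivity.
Qed.

Lemma zsummable_dominated (F G : Z -> R) (K : R) :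
  (forall n, Rabs (F n) <= K * G n) -> zsummable G -> zsummable F.
Proof.
  intros HFG [Hpos Hneg].
  split; eapply (ex_series_le (K := R_AbsRing) (V := R_CompleteNormedModule));
    try (intro; apply HFG); apply (ex_series_scal_l (V := R_NormedModule)); assumption.
Qed.

Lemma is_lim_seq_zsumR (F : Z -> R) :
  zsummable F ->
  is_lim_seq (fun N => sum_n (fun n => F (Z.of_nat n) + F (- Z.of_nat n - 1)%Z) N) (zsumR F).
Proof.
  intros [Hpos Hneg].
  apply is_lim_seq_ext with
    (fun N => sum_n (fun n => F (Z.of_nat n)) N + sum_n (fun n => F (- Z.of_nat n - 1)%Z) N).
  - intro N; symmetry; apply (sum_n_plus (G := R_AbelianMonoid)).
  - exact (is_lim_seq_plus' _ _ _ _ (Series_correct _ Hpos) (Series_correct _ Hneg)).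
Qed.

Lemma is_lim_seq_Cmod (s : nat -> C) (z : C) :
  is_lim_seq (fun N => Re (s N)) (Re z) -> is_lim_seq (fun N => Im (s N)) (Im z) ->
  is_lim_seq (fun N => Cmod (s N)) (Cmod z).
Proof.
  intros Hre Him.
  apply (is_lim_seq_continuous sqrt (fun N => Re (s N) ^ 2 + Im (s N) ^ 2)).
  - apply continuity_pt_sqrt; nra.
  - apply is_lim_seq_plus'; simpl; apply is_lim_seq_mult'; try assumption;
      apply is_lim_seq_mult'; try assumption; apply is_lim_seq_const.
Qed.

Lemma Cmod_zsumC_le (f : Z -> C) (B : nat -> R) (l : R) :
  zsummable (fun n => Re (f n)) -> zsummable (fun n => Im (f n)) ->
  (forall N, Cmod (zpartial f N) <= B N) -> is_lim_seq B l ->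
  Cmod (zsumC f) <= l.
Proof.
  intros Hre Him HB Hl.
  assert (Hlim : is_lim_seq (fun N => Cmod (zpartial f N)) (Cmod (zsumC f))).
  { apply is_lim_seq_Cmod; unfold zpartial.
    - eapply is_lim_seq_ext; [intro; symmetry; apply Re_sum_n | apply (is_lim_seq_zsumR _ Hre)].
    - eapply is_lim_seq_ext; [intro; symmetry; apply Im_sum_n | apply (is_lim_seq_zsumR _ Him)]. }
  exact (is_lim_seq_le _ _ _ _ HB Hlim Hl).
Qed.

Section AbelSummation.

Variables (U psi : Z -> C) (G : Z -> R) (M : R).
Hypothesis U_bounded : forall k, Cmod (U k) <= M.
(* [G] is a potential for the variation of [psi]; below, [G k] is an integral of |φ'| up to x - kh. *)
Hypothesis psi_step : forall k, Cmod (psi k - psi (k + 1)%Z)%C <= G k - G (k + 1)%Z.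

Local Notation f := (fun n => (conv_v U n * psi n)%C).

Lemma U_bound_ge_0 : 0 <= M.
Proof. exact (Rle_trans _ _ _ (Cmod_ge_0 (U 0%Z)) (U_bounded 0%Z)). Qed.

Lemma Cmod_abel_term (k : Z) : Cmod (U k * (psi k - psi (k + 1)%Z))%C <= M * (G k - G (k + 1)%Z).
Proof.
  rewrite Cmod_mult.
  apply Rmult_le_compat; [apply Cmod_ge_0 | apply Cmod_ge_0 | apply U_bounded | apply psi_step].
Qed.

(* Summation by parts: the symmetric partial sum over [-N-1, N] telescopes up to two boundary terms. *)
Lemma zpartial_conv_v_abel (N : nat) :
  Cmod (zpartial f N - U (Z.of_nat N) * psi (Z.of_nat N)
        + U (- Z.of_nat N - 2)%Z * psi (- Z.of_nat N - 1)%Z)%C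
  <= M * (G (- Z.of_nat N - 1)%Z - G (Z.of_nat N)).
Proof.
  induction N as [|N IH].
  - rewrite zpartial_0; unfold conv_v; simpl.
    replace (_ + _)%C with (U (-1)%Z * (psi (-1)%Z - psi (-1 + 1)%Z))%C by (simpl; ring).
    apply Cmod_abel_term.
  - rewrite zpartial_S, Nat2Z.inj_succ, <- Z.add_1_r; unfold conv_v.
    set (n := Z.of_nat N) in *.
    set (partial := zpartial _ N) in *.
    replace (n + 1 - 1)%Z with n by lia.
    replace (- (n + 1) - 1)%Z with (- n - 2)%Z by lia.
    replace (- (n + 1) - 2)%Z with (- n - 3)%Z by lia.
    replace (- n - 2 - 1)%Z with (- n - 3)%Z by lia.
    replace (_ + _)%C with
      ((partial - U n * psi n + U (- n - 2)%Z * psi (- n - 1)%Z)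
       + U n * (psi n - psi (n + 1)%Z)
       + U (- n - 2)%Z * (psi (- n - 2)%Z - psi (- n - 1)%Z))%C by ring.
    pose proof (Cmod_abel_term n) as Hright.
    pose proof (Cmod_abel_term (- n - 2)%Z) as Hleft.
    replace (- n - 2 + 1)%Z with (- n - 1)%Z in Hleft by lia.
    eapply Rle_trans; [apply Cmod_triangle |].
    eapply Rle_trans; [apply Rplus_le_compat_r, Cmod_triangle |].
    lra.
Qed.

Lemma Cmod_zsumC_conv_v_le (I : R) :
  (forall N : nat, G (- Z.of_nat N - 1)%Z - G (Z.of_nat N) <= I) ->
  zsummable (fun k => Cmod (psi k)) ->
  Cmod (zsumC f) <= M * I.
Proof.
  intros HI Hpsi.
  pose proof U_bound_ge_0 as HM.
  assert (Hf : forall n, Cmod (f n) <= 2 * M * Cmod (psi n)).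
  { intro n; unfold conv_v; rewrite Cmod_mult.
    apply Rmult_le_compat_r; [apply Cmod_ge_0 |].
    eapply Rle_trans; [apply Cmod_triangle |]; rewrite Cmod_opp.
    pose proof (U_bounded n); pose proof (U_bounded (n - 1)%Z); lra. }
  apply (Cmod_zsumC_le _
    (fun N => M * I + M * (Cmod (psi (Z.of_nat N)) + Cmod (psi (- Z.of_nat N - 1)%Z)))).
  - apply (zsummable_dominated _ _ (2 * M) (fun n => Rle_trans _ _ _ (re_le_Cmod _) (Hf n)) Hpsi).
  - apply (zsummable_dominated _ _ (2 * M) (fun n => Rle_trans _ _ _ (Rle_trans _ _ _
      (Rmax_r _ _) (Rmax_Cmod _)) (Hf n)) Hpsi).
  - intro N.
    set (n := Z.of_nat N).
    pose proof (zpartial_conv_v_abel N) as Habel; fold n in Habel.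
    replace (zpartial f N) with
      ((zpartial f N - U n * psi n + U (- n - 2)%Z * psi (- n - 1)%Z)
       + U n * psi n - U (- n - 2)%Z * psi (- n - 1)%Z)%C by ring.
    eapply Rle_trans; [apply Cmod_triangle |]; rewrite Cmod_opp.
    eapply Rle_trans; [apply Rplus_le_compat_r, Cmod_triangle |].
    rewrite !Cmod_mult.
    assert (Hbulk : M * (G (- n - 1)%Z - G n) <= M * I) by (apply Rmult_le_compat_l; [exact HM | apply HI]).
    assert (Hright : Cmod (U n) * Cmod (psi n) <= M * Cmod (psi n))
      by (apply Rmult_le_compat_r; [apply Cmod_ge_0 | apply U_bounded]).
    assert (Hleft : Cmod (U (- n - 2)%Z) * Cmod (psi (- n - 1)%Z) <= M * Cmod (psi (- n - 1)%Z))
      by (apply Rmult_le_compat_r; [apply Cmod_ge_0 | apply U_bounded]).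
    lra.
  - destruct Hpsi as [Hpos Hneg].
    replace (Finite (M * I)) with (Finite (M * I + M * (0 + 0))) by (f_equal; ring).
    apply is_lim_seq_plus'; [apply is_lim_seq_const |].
    apply is_lim_seq_mult'; [apply is_lim_seq_const |].
    apply is_lim_seq_plus'; apply ex_series_lim_0; assumption.
Qed.

End AbelSummation.
Theorem mainTheorem2
  (a b c d T h Om : R) (g : R -> C) (u q : Z -> C) (phi dphi : R -> C)
  (Hdet : a * d - b * c = 1)
  (Hb : b <> 0) (HT : 0 < T) (Hh : 0 < h < 1) (HOm : 0 < Om)
  (HTdef : T = PI * b / Om)
  (Hband : LCT_bandlimited a b Om g)
  (Hg1 : forall t, Cmod (g t) <= 1)
  (Hq : forall n : Z,
      q n = csgn (Cplus (Cmult (cis (- (a * (2 * IZR n - 1) * (T * h) ^ 2) / (2 * b))) (u (n - 1)%Z))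
                        (g (IZR n * T * h))))
  (Hu : forall n : Z,
      u n = Cplus (Cminus (g (IZR n * T * h)) (q n))
                  (Cmult (cis (- (a * (2 * IZR n - 1) * (T * h) ^ 2) / (2 * b))) (u (n - 1)%Z)))
  (Hustable : forall n : Z, Rabs (Re (u n)) < 1 /\ Rabs (Im (u n)) < 1)
  (Hderiv : forall x : R, is_derive (K := R_AbsRing) (V := C_R_NormedModule) phi x (dphi x))
  (Hcont : forall x : R, continuous dphi x)
  (HL1 : ex_RInt_gen (fun x => Cmod (dphi x)) (Rbar_locally m_infty) (Rbar_locally p_infty))
  (Hsum : forall x : R, zsummable (fun n => Cmod (phi (x - IZR n * h)))) :
  forall t : R,
    Cmod (err a b T h u phi t)
      <= h * sqrt 2 * RInt_gen (fun x => Cmod (dphi x)) (Rbar_locally m_infty) (Rbar_locally p_infty).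
Proof.
  intro t.
  set (x := t / T).
  set (gabs := fun y => Cmod (dphi y)).
  assert (Hgabs : forall y, continuous gabs y) by (intro; apply continuous_Cmod_comp, Hcont).
  unfold err; rewrite !Cmod_mult, Cmod_cis, Cmod_R, Rabs_pos_eq, Rmult_1_r, Rmult_assoc by lra.
  apply Rmult_le_compat_l; [lra |].
  apply (Cmod_zsumC_conv_v_le (fun k => (mLam a b T h k * u k)%C) (fun k => phi (x - IZR k * h))
           (fun k => RInt gabs 0 (x - IZR k * h))).
  - intro k; unfold mLam; rewrite Cmod_mult, Cmod_cis, Rmult_1_l.
    destruct (Hustable k); apply Cmod_le_sqrt2; lra.
  - intro k; rewrite RInt_sub_RInt by exact Hgabs.
    apply Cmod_sub_le_RInt_derive; [exact Hderiv | exact Hcont |].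
    rewrite plus_IZR; nra.
  - intro N; rewrite RInt_sub_RInt by exact Hgabs.
    apply RInt_le_RInt_gen; [exact Hgabs | intro; apply Cmod_ge_0 | exact HL1 |].
    rewrite minus_IZR, opp_IZR; pose proof (pos_INR N); rewrite <- INR_IZR_INZ; nra.
  - exact (Hsum x).
Qed.
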